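(* Let $q$ be a prime power, $m\ge2$, $1\le k<n$. The set $\mathcal R_1^*\cap \mathcal K$ is in one-to-one correspondence with the set $$V_R := \{(\boldsymbol\alpha,\boldsymbol\beta)\in \mathbb{F}_{q^m}^k \times \mathbb{F}_{q^m}^{n-k-1} \mid \alpha_i,\ \alpha_i\beta_j \in \ker(\mathrm{Tr}_{\mathbb{F}_{q^m}/\mathbb{F}_q})\setminus\{0\} \text{ for all } i,j\},$$ which equals $\{(\boldsymbol\alpha,\boldsymbol\beta) \mid \alpha_i \in \ker(\mathrm{Tr}_{\mathbb{F}_{q^m}/\mathbb{F}_q})\setminus\{0\},\ \beta_j \in \bigcap_{i=1}^k\ker(\mathrm{T}_{\alpha_i})\setminus\{0\}\}$, via the map $\psi:V_R \to \mathcal R_1^*\cap \mathcal K$ given by $$(\boldsymbol\alpha,\boldsymbol\beta)\longmapsto (\alpha_1,\dots,\alpha_k)^T\,(1, \beta_1,\ldots, \beta_{n-k-1}).$$ Consequently $|\mathcal R_1^*\cap \mathcal K|\leq (q^{m-1}-1)^{n-1}$.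
   Context: $\mathrm{Tr}_{\mathbb{F}_{q^m}/\mathbb{F}_q}(\alpha)=\sum_{i=0}^{m-1}\alpha^{q^i}$, and for $\alpha\in\mathbb{F}_{q^m}^*$, $\mathrm{T}_\alpha:\mathbb{F}_{q^m}\to\mathbb{F}_q$ is $\beta\mapsto \mathrm{Tr}_{\mathbb{F}_{q^m}/\mathbb{F}_q}(\alpha\beta)$. $\mathcal R_1^*:=\{A\in (\mathbb{F}_{q^m}^* )^{k\times (n-k)} \mid \mathrm{rk}(A)=1\}$ and $\mathcal K:=\left(\ker \mathrm{Tr}_{\mathbb{F}_{q^m}/\mathbb{F}_q}\right)^{k\times(n-k)}$. *)

From HB Require Import structures.
From mathcomp Require Import all_boot all_order all_algebra.
Set Implicit Arguments. Unset Strict Implicit. Unset Printing Implicit Defensive.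
Import GRing.Theory.
Local Open Scope ring_scope.

(* L plays the role of F_{q^m}. Trace Tr_{F_{q^m}/F_q}(x) = sum_{i<m} x^(q^i),
   viewed as an element of L (it lies in the subfield F_q). *)
Definition trace (L : finFieldType) (q m : nat) (x : L) : L :=
  \sum_(i < m) x ^+ (q ^ i)%N.

Definition Talpha (L : finFieldType) (q m : nat) (a : L) (b : L) : L :=
  trace q m (a * b).

Definition kerTr (L : finFieldType) (q m : nat) : {set L} :=
  [set x | trace q m x == 0].

Definition kerT (L : finFieldType) (q m : nat) (a : L) : {set L} :=
  [set y | Talpha q m a y == 0].

Definition R1star (L : finFieldType) (k r : nat) : {set 'M[L]_(k, r)} :=
  [set A : 'M[L]_(k, r) | [forall i, forall j, A i j != 0] && (\rank A == 1)%N].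

Definition Kset (L : finFieldType) (q m k r : nat) : {set 'M[L]_(k, r)} :=
  [set A : 'M[L]_(k, r) | [forall i, forall j, A i j \in kerTr L q m]].

Definition VR (L : finFieldType) (q m k p : nat) : {set 'cV[L]_k * 'rV[L]_p} :=
  [set ab : 'cV[L]_k * 'rV[L]_p | [forall i, ab.1 i 0 \in kerTr L q m :\ 0]
         && [forall i, forall j, ab.1 i 0 * ab.2 0 j \in kerTr L q m :\ 0]].

Definition VR' (L : finFieldType) (q m k p : nat) : {set 'cV[L]_k * 'rV[L]_p} :=
  [set ab : 'cV[L]_k * 'rV[L]_p | [forall i, ab.1 i 0 \in kerTr L q m :\ 0]
         && [forall j, ab.2 0 j \in
               (\bigcap_(i < k) kerT q m (ab.1 i 0)) :\ 0]].

(* the row vector (1, beta_1, ..., beta_p) of length r (used with r = p + 1) *)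
Definition ext1 (L : finFieldType) (p r : nat) (b : 'rV[L]_p) : 'rV[L]_r :=
  \row_(j < r) nth 0 (1 :: [seq b 0 i | i <- enum 'I_p]) j.

Definition psi (L : finFieldType) (k p r : nat) (ab : 'cV[L]_k * 'rV[L]_p)
  : 'M[L]_(k, r) := ab.1 *m ext1 r ab.2.

(* The trace is a polynomial map of degree q^(m-1), so its kernel has at most
   q^(m-1) elements.  A rank-one matrix with nonzero entries is the product of
   its first column and its first row rescaled by the corner entry, which
   identifies it with a point of V_R; conversely every alpha beta^T built from
   V_R has nonzero entries in ker Tr and rank one.  Counting V_R through its
   k + (n-k-1) nonzero trace-zero coordinates alpha_i, alpha_1 beta_j gives the
   bound. *)
From Pilot Require Import Defs.
From HB Require Import structures.
From mathcomp Require Import all_boot all_order all_algebra.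
Set Implicit Arguments. Unset Strict Implicit. Unset Printing Implicit Defensive.
Import GRing.Theory.
Local Open Scope ring_scope.

Section TraceKernel.
Variables (L : finFieldType) (q m : nat).
Hypotheses (q_gt1 : (1 < q)%N) (m_gt0 : (0 < m)%N).

Definition trace_poly : {poly L} := \sum_(i < m) 'X^(q ^ i).

Lemma horner_trace_poly (x : L) : trace_poly.[x] = trace q m x.
Proof. by rewrite horner_sum; apply: eq_bigr => i _; rewrite hornerXn. Qed.

Lemma coef_trace_poly j : trace_poly`_j = \sum_(i < m) ((j == q ^ i)%N)%:R.
Proof. by rewrite coef_sum; apply: eq_bigr => i _; rewrite coefXn. Qed.

Lemma size_trace_poly : (size trace_poly <= (q ^ (m - 1)).+1)%N.
Proof.
apply/leq_sizeP => j lt_j; rewrite coef_trace_poly big1 // => i _.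
suff /negbTE -> : (j != q ^ i)%N by [].
rewrite neq_ltn (leq_trans _ lt_j) ?orbT // ltnS leq_exp2l //.
by rewrite leq_subRL // add1n.
Qed.

Lemma trace_poly_neq0 : trace_poly != 0.
Proof.
have top_lt_m : (m - 1 < m)%N by rewrite subn1 prednK.
apply/eqP => /(congr1 (fun P : {poly L} => P`_(q ^ (m - 1))%N)).
rewrite coef_trace_poly coef0 (bigD1 (Ordinal top_lt_m)) //= eqxx big1.
  by rewrite addr0 => /eqP; rewrite oner_eq0.
move=> i ne_i; rewrite eqn_exp2l //.
suff /negbTE -> : (m - 1)%N != i by [].
by apply: contraNneq ne_i => top_i; apply/eqP/val_inj; rewrite /= top_i.
Qed.

Lemma trace0 : trace q m (0 : L) = 0.
Proof.
rewrite /trace big1 // => i _.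
by rewrite expr0n expn_eq0 gtn_eqF ?(ltnW q_gt1).
Qed.

Lemma card_kerTr : (#|kerTr L q m| <= q ^ (m - 1))%N.
Proof.
have roots : all (root trace_poly) (enum (kerTr L q m)).
  by apply/allP => x; rewrite mem_enum inE /root horner_trace_poly.
have := max_poly_roots trace_poly_neq0 roots (enum_uniq _).
by rewrite -cardE => /leq_trans /(_ size_trace_poly).
Qed.

Lemma card_kerTr_nonzero : (#|kerTr L q m :\ 0%R| <= q ^ (m - 1) - 1)%N.
Proof.
have := cardsD1 (0 : L) (kerTr L q m); rewrite inE trace0 eqxx add1n => card_ker.
by rewrite leq_subRL ?expn_gt0 ?(ltnW q_gt1) // add1n -card_ker card_kerTr.
Qed.

End TraceKernel.

Section RankOne.
Variable F : fieldType.

Lemma rank_col_row k r (a : 'cV[F]_k) (b : 'rV[F]_r) :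
  a *m b != 0 -> \rank (a *m b) = 1%N.
Proof.
move=> ab_neq0; apply/eqP; rewrite eqn_leq lt0n mxrank_eq0 ab_neq0 andbT.
exact: leq_trans (mxrankM_maxl _ _) (rank_leq_col _).
Qed.

(* All rows of A are multiples of its first row, which is nonzero. *)
Lemma rank1_minor k r (A : 'M[F]_(k.+1, r)) i j l :
  \rank A = 1%N -> row 0 A != 0 -> A i j * A 0 l = A i l * A 0 j.
Proof.
move=> rankA1 row0_neq0.
have rank_row0 : \rank (row 0 A) = 1%N.
  by apply/eqP; rewrite eqn_leq rank_leq_row lt0n mxrank_eq0.
have A_sub_row0 : (A <= row 0 A)%MS.
  by rewrite -(geq_leqif (mxrank_leqif_sup (row_sub 0 A))) rank_row0 rankA1.
have /sub_rVP[c /matrixP rowiA] := submx_trans (row_sub i A) A_sub_row0.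
have Ai x : A i x = c * A 0 x by have := rowiA 0 x; rewrite !mxE.
by rewrite !Ai mulrAC.
Qed.

End RankOne.

Section Correspondence.
Variables (L : finFieldType) (q m k p : nat).

Local Notation VR := (VR L q m k.+1 p).
Local Notation psi := (@psi L k.+1 p p.+1).
Local Notation nzK := (kerTr L q m :\ 0).

Lemma ext1_0 (b : 'rV[L]_p) : ext1 p.+1 b 0 0 = 1.
Proof. by rewrite mxE. Qed.

Lemma ext1_lift (b : 'rV[L]_p) j : ext1 p.+1 b 0 (lift 0 j) = b 0 j.
Proof.
by rewrite mxE /= /bump /= add0n (nth_map j) ?size_enum_ord // nth_ord_enum.
Qed.

Lemma psiE (ab : 'cV[L]_k.+1 * 'rV[L]_p) i j :
  psi ab i j = ab.1 i 0 * ext1 p.+1 ab.2 0 j.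
Proof. by rewrite mxE big_ord1. Qed.

Lemma in_VR (a : 'cV[L]_k.+1) (b : 'rV[L]_p) :
  ((a, b) \in VR) = [forall i, a i 0 \in nzK] && [forall i, forall j, a i 0 * b 0 j \in nzK].
Proof. by rewrite inE. Qed.

Lemma VR_alpha0_neq0 (a : 'cV[L]_k.+1) (b : 'rV[L]_p) : (a, b) \in VR -> a 0 0 != 0.
Proof. by rewrite in_VR => /andP[/forallP/(_ 0) + _]; rewrite !inE => /andP[]. Qed.

Lemma VR_eq : VR = VR' L q m k.+1 p.
Proof.
apply/setP => -[a b]; rewrite in_VR inE /=.
apply/andP/andP => -[/forallP a_nzK /forallP ab_nzK]; split; apply/forallP => //.
- move=> j; rewrite !inE; apply/andP; split.
    have := forallP (ab_nzK 0) j; rewrite !inE => /andP[ab_neq0 _].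
    by apply: contraNneq ab_neq0 => ->; rewrite mulr0.
  apply/bigcapP => i _; have := forallP (ab_nzK i) j.
  by rewrite !inE => /andP[_].
- move=> i; apply/forallP => j; have := ab_nzK j.
  rewrite !inE => /andP[b_neq0 /bigcapP/(_ i isT)]; rewrite inE => ->.
  by have := a_nzK i; rewrite !inE => /andP[a_neq0 _]; rewrite mulf_neq0.
Qed.

Lemma psi_inj : {in VR, injective psi}.
Proof.
move=> [a b] VRab [a' b'] /matrixP psi_eq.
have eq_a : a = a'.
  apply/matrixP => i l; rewrite (ord1 l).
  by have := psi_eq i 0; rewrite !psiE !ext1_0 !mulr1.
subst a'; congr pair; apply/matrixP => l j; rewrite (ord1 l).
apply: (mulfI (VR_alpha0_neq0 VRab)).
by have := psi_eq 0 (lift 0 j); rewrite !psiE !ext1_lift.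
Qed.

Lemma psi_VR_sub : psi @: VR \subset R1star L k.+1 p.+1 :&: Kset L q m k.+1 p.+1.
Proof.
apply/subsetP => _ /imsetP[[a b] VRab ->].
move: VRab; rewrite in_VR => /andP[/forallP a_nzK /forallP ab_nzK].
have entry_nzK i j : psi (a, b) i j \in nzK.
  rewrite psiE; case: (unliftP 0 j) => [j'|] ->.
    by rewrite ext1_lift; apply: (forallP (ab_nzK i)).
  by rewrite ext1_0 mulr1; apply: a_nzK.
have entry_neq0 i j : psi (a, b) i j != 0.
  by have := entry_nzK i j; rewrite !inE => /andP[].
rewrite !inE rank_col_row; last first.
  by apply: contra (entry_neq0 0 0) => /eqP ab0; rewrite /Defs.psi ab0 mxE.
rewrite eqxx andbT; apply/andP; split; apply/forallP => i; apply/forallP => j.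
  exact: entry_neq0.
by have := entry_nzK i j; rewrite inE => /andP[].
Qed.

Lemma R1K_sub_psi_VR : R1star L k.+1 p.+1 :&: Kset L q m k.+1 p.+1 \subset psi @: VR.
Proof.
apply/subsetP => A; rewrite !inE => /andP[/andP[/forallP A_neq0 /eqP rankA1] /forallP A_ker].
have A00_neq0 : A 0 0 != 0 by apply: (forallP (A_neq0 0)).
have A_minor i j : A i j * A 0 0 = A i 0 * A 0 j.
  apply: rank1_minor => //; apply: contra A00_neq0 => /eqP/matrixP/(_ 0 0).
  by rewrite !mxE => ->.
pose a : 'cV[L]_k.+1 := \col_i A i 0.
pose b : 'rV[L]_p := \row_j (A 0 (lift 0 j) / A 0 0).
have ab_A i j : a i 0 * b 0 j = A i (lift 0 j) by rewrite !mxE mulrA -A_minor mulfK.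
have A_nzK i j : A i j \in nzK.
  by rewrite !inE (forallP (A_neq0 i) j); have := forallP (A_ker i) j; rewrite inE.
apply/imsetP; exists (a, b).
  rewrite in_VR; apply/andP; split; apply/forallP => i; first by rewrite mxE.
  by apply/forallP => j; rewrite ab_A.
apply/matrixP => i j; rewrite psiE /=; case: (unliftP 0 j) => [j'|] ->.
  by rewrite ext1_lift ab_A.
by rewrite ext1_0 mulr1 mxE.
Qed.

Lemma psi_VR : psi @: VR = R1star L k.+1 p.+1 :&: Kset L q m k.+1 p.+1.
Proof. by apply/eqP; rewrite eqEsubset psi_VR_sub R1K_sub_psi_VR. Qed.

(* Code (alpha, beta) by alpha together with alpha_1 beta; all k + p coordinates are in nzK. *)
Definition VR_code (ab : 'cV[L]_k.+1 * 'rV[L]_p) : {ffun 'I_k.+1 + 'I_p -> L} :=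
  [ffun x => match x with inl i => ab.1 i 0 | inr j => ab.1 0 0 * ab.2 0 j end].

Lemma card_VR : (#|VR| <= #|nzK| ^ (k.+1 + p))%N.
Proof.
have code_inj : {in VR &, injective VR_code}.
  move=> [a b] [a' b'] VRab _ /ffunP code_eq.
  have eq_a : a = a'.
    by apply/matrixP => i l; rewrite (ord1 l); have := code_eq (inl i); rewrite !ffunE.
  subst a'; congr pair; apply/matrixP => l j; rewrite (ord1 l).
  apply: (mulfI (VR_alpha0_neq0 VRab)).
  by have := code_eq (inr j); rewrite !ffunE.
have code_on : VR_code @: VR \subset ffun_on nzK.
  apply/subsetP => _ /imsetP[[a b] VRab ->]; apply/ffun_onP => -[i|j]; rewrite ffunE.
    by move: VRab; rewrite in_VR => /andP[/forallP ->].
  by move: VRab; rewrite in_VR => /andP[_ /forallP/(_ 0)/forallP ->].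
rewrite -(card_in_imset code_inj) (leq_trans (subset_leq_card code_on)) //.
by rewrite card_ffun_on card_sum !card_ord.
Qed.

End Correspondence.

Theorem lemma4p10 (L : finFieldType) (q m n k : nat) :
  (exists p e : nat, [/\ prime p, (0 < e)%N & q = (p ^ e)%N]) ->
  (2 <= m)%N -> #|L| = (q ^ m)%N ->
  (1 <= k)%N -> (k < n)%N ->
  [/\ VR L q m k (n - k - 1) = VR' L q m k (n - k - 1),
      {in VR L q m k (n - k - 1), injective (@psi L k (n - k - 1) (n - k))},
      (@psi L k (n - k - 1) (n - k)) @: VR L q m k (n - k - 1)
        = R1star L k (n - k) :&: Kset L q m k (n - k)
    & (#|R1star L k (n - k) :&: Kset L q m k (n - k)|
        <= (q ^ (m - 1) - 1) ^ (n - 1))%N].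
Proof.
move=> [ch [e [prime_ch e_gt0 ->]]] m_ge2 _ k_ge1 k_lt_n.
have q_gt1 : (1 < ch ^ e)%N by rewrite -{1}(expn0 ch) ltn_exp2l ?prime_gt1.
have m_gt0 : (0 < m)%N by apply: ltnW.
case: k k_ge1 k_lt_n => // k _ k_lt_n.
have r_eq : (n - k.+1 = (n - k.+1 - 1).+1)%N by rewrite subn1 prednK ?subn_gt0.
have n1_eq : (n - 1 = k.+1 + (n - k.+1 - 1))%N.
  by rewrite addnBA ?subn_gt0 // subnKC // ltnW.
move: (n - k.+1 - 1)%N r_eq n1_eq => p -> ->.
split; [exact: VR_eq | exact: psi_inj | exact: psi_VR |].
rewrite -psi_VR card_in_imset => [|ab ab' ab_VR _]; last exact: (psi_inj ab_VR).
apply: leq_trans (@card_VR L _ m k p) _.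
by rewrite leq_exp2r // card_kerTr_nonzero.
Qed.
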